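(* Let $\theta\in[0,\infty]$, $\eta\in(0,1)$, gravity parameters $g_1,g_2,\ldots\ge0$, and a sequence of examples $(x_1,y_1),(x_2,y_2),\ldots$ with $x_i\in\mathbb{R}^d$, $y_i\in\mathbb{R}$. Suppose there is $C>0$ with $\|x_i\|\le C$ for all $i$, and $1-2C^2\eta\neq0$. Run the following algorithm: start with $v_1=0\in\mathbb{R}^d$; at trial $i=1,2,\ldots$, set $w_i=T_1(v_i,g_i\eta,\theta)$, predict $\hat y_i=w_i^Tx_i$, observe $y_i$, and set $v_{i+1}=w_i+2\eta(y_i-\hat y_i)x_i$. Then for every $T\ge1$ and every $\bar w\in\mathbb{R}^d$, \[ \frac{1-2C^2\eta}{T}\sum_{i=1}^T\left[(w_i^Tx_i-y_i)^2+\frac{g_i}{1-2C^2\eta}\|w_i\cdot I(|w_i|\le\theta)\|_1\right] \le \frac{\|\bar w\|^2}{2\eta T}+\frac1T\sum_{i=1}^T\Big[(\bar w^Tx_i-y_i)^2+g_{i+1}\|\bar w\cdot I(|w_{i+1}|\le\theta)\|_1\Big]. \]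
   Context: $\|\cdot\|$ is the Euclidean norm and $\|\cdot\|_1$ the $1$-norm. For $v\in\mathbb{R}^d$, $\alpha\ge0$, $\theta\in[0,\infty]$, $T_1(v,\alpha,\theta)$ is applied coordinatewise: $T_1(v_j,\alpha,\theta)=\max(0,v_j-\alpha)$ if $v_j\in[0,\theta]$, $=\min(0,v_j+\alpha)$ if $v_j\in[-\theta,0]$, and $=v_j$ otherwise. For $v,v'\in\mathbb{R}^d$, $\|v\cdot I(|v'|\le\theta)\|_1=\sum_{j=1}^d|v_j|\,I(|v'_j|\le\theta)$ with $I$ the indicator function. The vector $w_i$ is the weight vector used for prediction at trial $i$. *)

From mathcomp Require Import all_boot all_order all_algebra.
From mathcomp Require Import reals constructive_ereal.
Set Implicit Arguments. Unset Strict Implicit. Unset Printing Implicit Defensive.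
Import Order.TTheory GRing.Theory Num.Theory.
Local Open Scope ring_scope.

Section Defs.
Variables (R : realType) (d : nat).
Definition vec := 'I_d -> R.

Definition dot (u v : vec) : R := \sum_(j < d) u j * v j.
Definition sqnorm (u : vec) : R := \sum_(j < d) u j ^+ 2.

Definition T1s (x alpha : R) (theta : \bar R) : R :=
  if (0 <= x) && (x%:E <= theta)%E then Num.max 0 (x - alpha)
  else if (x <= 0) && ((- x)%:E <= theta)%E then Num.min 0 (x + alpha)
  else x.

Definition T1 (v : vec) (alpha : R) (theta : \bar R) : vec :=
  fun j => T1s (v j) alpha theta.

Definition trunc_l1 (v v' : vec) (theta : \bar R) : R :=
  \sum_(j < d) (if (`|v' j|%:E <= theta)%E then `|v j| else 0).

(* The algorithm: v_1 = 0, w_i = T1(v_i, g_i eta, theta),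
   v_{i+1} = w_i + 2 eta (y_i - w_i^T x_i) x_i.  Trials are indexed 1,2,...;
   index 0 of the sequences is unused.  vseq i = v_i for i >= 1. *)
Fixpoint vseq (g : nat -> R) (eta : R) (theta : \bar R)
    (x : nat -> vec) (y : nat -> R) (i : nat) : vec :=
  match i with
  | 0 => fun _ => 0
  | 1 => fun _ => 0
  | i'.+1 =>
      let w := T1 (vseq g eta theta x y i') (g i' * eta) theta in
      fun j => w j + 2 * eta * (y i' - dot w (x i')) * x i' j
  end.

Definition wseq g eta theta x y (i : nat) : vec :=
  T1 (vseq g eta theta x y i) (g i * eta) theta.
End Defs.

From mathcomp Require Import all_boot all_order all_algebra.
From mathcomp Require Import reals constructive_ereal.
From mathcomp Require Import ring lra.
Set Implicit Arguments. Unset Strict Implicit. Unset Printing Implicit Defensive.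
Import Order.TTheory GRing.Theory Num.Theory.
Local Open Scope ring_scope.

(* Track D_i = ||w_i - wbar||^2.  The gradient step decreases D by at least
   2 eta (1 - 2 C^2 eta) times the learner's loss, up to 2 eta times the
   comparator's loss; the truncation step T_1 is a soft-thresholding, i.e. a
   proximal step for the penalty g ||. I(|w| <= theta)||_1, so it decreases D
   further by the learner's penalty, up to the comparator's penalty measured on
   the same truncation region.  Summing over the trials telescopes D, and
   D_1 = ||wbar||^2 because v_1 = 0 gives w_1 = 0. *)

Section Truncation.
Variable R : realType.

Lemma T1s0 (a : R) (theta : \bar R) : 0 <= a -> T1s 0 a theta = 0.
Proof.
move=> a_ge0; rewrite /T1s lexx /=.
case: ifP => _; first by rewrite max_l // sub0r oppr_le0.
by case: ifP => _ //; rewrite min_l // add0r.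
Qed.

Lemma T1s_sub_sqr_le (v u a : R) (theta : \bar R) : 0 <= a ->
  let t := T1s v a theta in
  let in_region := (`|t|%:E <= theta)%E in
  (t - u) ^+ 2 + 2 * a * (if in_region then `|t| else 0)
  <= (v - u) ^+ 2 + 2 * a * (if in_region then `|u| else 0).
Proof.
move=> a_ge0 /=.
have u_le := ler_norm u.
have Nu_le : - u <= `|u| by rewrite ler_normr lexx orbT.
rewrite /T1s; case: ifP => [/andP[v_ge0 v_le] | not_pos].
  have le_theta z : 0 <= z <= v -> (z%:E <= theta)%E.
    by case/andP=> _ z_le; apply: le_trans v_le; rewrite lee_fin.
  case: (leP a v) => a_v.
    rewrite max_r ?subr_ge0 // ger0_norm ?subr_ge0 // le_theta; first nra.
    by apply/andP; split; lra.
  by rewrite max_l ?normr0 ?le_theta ?lexx //=; nra.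
case: ifP => [/andP[v_le0 Nv_le] | not_neg].
  have le_theta z : 0 <= z <= - v -> (z%:E <= theta)%E.
    by case/andP=> _ z_le; apply: le_trans Nv_le; rewrite lee_fin.
  case: (leP (v + a) 0) => va.
    rewrite ler0_norm // le_theta; first nra.
    by apply/andP; split; lra.
  rewrite normr0 le_theta; first nra.
  by apply/andP; split; lra.
case: ifP => // in_region; exfalso.
case: (leP 0 v) => v0.
  by rewrite ger0_norm // in in_region; rewrite v0 in_region in not_pos.
by rewrite ltr0_norm // in in_region; rewrite (ltW v0) in_region in not_neg.
Qed.

End Truncation.

Section Vectors.
Variables (R : realType) (d : nat).
Implicit Types (u v wb : vec R d).

Lemma sqnorm_ge0 u : 0 <= sqnorm u.
Proof. by apply: sumr_ge0 => j _; rewrite sqr_ge0. Qed.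

Lemma trunc_l1_ge0 u v (theta : \bar R) : 0 <= trunc_l1 u v theta.
Proof. by apply: sumr_ge0 => j _; case: ifP. Qed.

Lemma sqnorm_le_sqr u (C : R) : 0 < C -> Num.sqrt (sqnorm u) <= C ->
  sqnorm u <= C ^+ 2.
Proof.
by move=> C_gt0 le_C; rewrite -ler_sqrt ?sqr_ge0 // sqrtr_sqr gtr0_norm.
Qed.

Lemma sqnorm_T1_sub_le v wb (a : R) (theta : \bar R) : 0 <= a ->
  sqnorm (fun j => T1 v a theta j - wb j)
    + 2 * a * trunc_l1 (T1 v a theta) (T1 v a theta) theta
  <= sqnorm (fun j => v j - wb j) + 2 * a * trunc_l1 wb (T1 v a theta) theta.
Proof.
move=> a_ge0; rewrite /sqnorm /trunc_l1 !mulr_sumr -!big_split /=.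
by apply: ler_sum => j _; apply: T1s_sub_sqr_le.
Qed.

Lemma sqnorm_gradient_step_le (w wb xv : vec R d) (yv eta C : R) :
  0 < eta -> sqnorm xv <= C ^+ 2 ->
  sqnorm (fun j => (w j + 2 * eta * (yv - dot w xv) * xv j) - wb j)
  <= sqnorm (fun j => w j - wb j)
     - 2 * eta * (1 - 2 * C ^+ 2 * eta) * (dot w xv - yv) ^+ 2
     + 2 * eta * (dot wb xv - yv) ^+ 2.
Proof.
move=> eta_gt0 xv_le.
have cross : \sum_(j < d) (w j - wb j) * xv j
             = (dot w xv - yv) - (dot wb xv - yv).
  rewrite /dot opprB addrA subrK -sumrB.
  by apply: eq_bigr => j _; rewrite mulrBl.
have -> : sqnorm (fun j => (w j + 2 * eta * (yv - dot w xv) * xv j) - wb j)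
   = sqnorm (fun j => w j - wb j)
     - 4 * eta * (dot w xv - yv) * (\sum_(j < d) (w j - wb j) * xv j)
     + 4 * eta ^+ 2 * (dot w xv - yv) ^+ 2 * sqnorm xv.
  rewrite /sqnorm !mulr_sumr -sumrB -big_split /=.
  by apply: eq_bigr => j _; ring.
rewrite cross; move: (dot w xv - yv) (dot wb xv - yv) => r s.
have norm_term : 4 * eta ^+ 2 * r ^+ 2 * sqnorm xv
                 <= 4 * eta ^+ 2 * r ^+ 2 * C ^+ 2.
  by apply: ler_wpM2l => //; rewrite mulr_ge0 ?sqr_ge0 // mulr_ge0 ?sqr_ge0.
(* -4 eta r (r - s) = -2 eta r^2 + 2 eta s^2 - 2 eta (r - s)^2 *)
have : 0 <= eta * (r - s) ^+ 2 by rewrite mulr_ge0 ?sqr_ge0 // ltW.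
nra.
Qed.

End Vectors.

Section Algorithm.
Variables (R : realType) (d : nat) (theta : \bar R) (eta C : R).
Variables (g : nat -> R) (x : nat -> vec R d) (y : nat -> R) (wb : vec R d).
Hypothesis eta_gt0 : 0 < eta.
Hypothesis g_ge0 : forall i, (1 <= i)%N -> 0 <= g i.
Hypothesis x_bounded : forall i, (1 <= i)%N -> sqnorm (x i) <= C ^+ 2.

Local Notation w := (wseq g eta theta x y).
Local Notation K := (1 - 2 * C ^+ 2 * eta).
Let D i := sqnorm (fun j => w i j - wb j).

Lemma gravity_ge0 i : (1 <= i)%N -> 0 <= g i * eta.
Proof. by move=> i_ge1; rewrite mulr_ge0 ?g_ge0 // ltW. Qed.

Lemma wseq1 j : w 1%N j = 0.
Proof. by rewrite /wseq /T1 /= T1s0 // gravity_ge0. Qed.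

Lemma wseqS i : (1 <= i)%N ->
  w i.+1 = T1 (fun j => w i j + 2 * eta * (y i - dot (w i) (x i)) * x i j)
              (g i.+1 * eta) theta.
Proof. by case: i. Qed.

Lemma potential_step i : (1 <= i)%N ->
  D i.+1 - D i + 2 * eta * K * (dot (w i) (x i) - y i) ^+ 2
    + 2 * eta * (g i.+1 * trunc_l1 (w i.+1) (w i.+1) theta)
  <= 2 * eta * (dot wb (x i) - y i) ^+ 2
     + 2 * eta * (g i.+1 * trunc_l1 wb (w i.+1) theta).
Proof.
move=> i_ge1.
have := sqnorm_T1_sub_le
  (fun j => w i j + 2 * eta * (y i - dot (w i) (x i)) * x i j) wb theta
  (gravity_ge0 (ltn0Sn i)).
rewrite -wseqS // /D => truncation.
have := sqnorm_gradient_step_le (w i) wb (y i) eta_gt0 (x_bounded i_ge1).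
lra.
Qed.

Lemma trunc_sum_shift_le T :
  \sum_(1 <= i < T.+1) g i * trunc_l1 (w i) (w i) theta
  <= \sum_(1 <= i < T.+1) g i.+1 * trunc_l1 (w i.+1) (w i.+1) theta.
Proof.
have first0 : g 1%N * trunc_l1 (w 1%N) (w 1%N) theta = 0.
  rewrite /trunc_l1 big1 ?mulr0 // => j _.
  by rewrite wseq1 normr0; case: ifP.
case: T => [|T]; first by rewrite !big_geq.
rewrite big_nat_recl //= first0 add0r [in X in _ <= X]big_nat_recr //= lerDl.
by rewrite mulr_ge0 ?g_ge0 ?trunc_l1_ge0.
Qed.

Lemma regret_bound T :
  K * \sum_(1 <= i < T.+1) (dot (w i) (x i) - y i) ^+ 2
    + \sum_(1 <= i < T.+1) g i * trunc_l1 (w i) (w i) theta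
  <= sqnorm wb / (2 * eta)
     + \sum_(1 <= i < T.+1)
         ((dot wb (x i) - y i) ^+ 2 + g i.+1 * trunc_l1 wb (w i.+1) theta).
Proof.
have summed := ler_sum_nat (fun i (hi : (1 <= i < T.+1)%N) =>
  potential_step (proj1 (andP hi))).
rewrite /= !big_split /= sumrN -sumrB telescope_sumr // -!mulr_sumr in summed.
have D1 : D 1%N = sqnorm wb.
  by apply: eq_bigr => j _; rewrite wseq1 sub0r sqrrN.
have DT_ge0 : 0 <= D T.+1 := sqnorm_ge0 _.
have two_eta_gt0 : 0 < 2 * eta by rewrite mulr_gt0.
have shift := ler_wpM2l (ltW two_eta_gt0) (trunc_sum_shift_le T).
rewrite D1 in summed.
rewrite big_split /= -(ler_pM2l two_eta_gt0) !mulrDr.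
rewrite [2 * eta * (_ / _)]mulrC divfK ?gt_eqF //.
lra.
Qed.

End Algorithm.

Theorem corollary1 (R : realType) (d : nat) (theta : \bar R) (eta : R)
  (g : nat -> R) (x : nat -> vec R d) (y : nat -> R) (C : R) :
  (0 <= theta)%E -> 0 < eta < 1 ->
  (forall i, (1 <= i)%N -> 0 <= g i) ->
  0 < C ->
  (forall i, (1 <= i)%N -> Num.sqrt (sqnorm (x i)) <= C) ->
  1 - 2 * C ^+ 2 * eta != 0 ->
  forall (T : nat) (wbar : vec R d), (1 <= T)%N ->
  let w := wseq g eta theta x y in
  (1 - 2 * C ^+ 2 * eta) / T%:R *
    \sum_(1 <= i < T.+1)
      ((dot (w i) (x i) - y i) ^+ 2
       + g i / (1 - 2 * C ^+ 2 * eta) * trunc_l1 (w i) (w i) theta)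
  <= sqnorm wbar / (2 * eta * T%:R)
     + 1 / T%:R * \sum_(1 <= i < T.+1)
        ((dot wbar (x i) - y i) ^+ 2
         + g i.+1 * trunc_l1 wbar (w i.+1) theta).
Proof.
move=> _ /andP[eta_gt0 _] g_ge0 C_gt0 x_le K_neq0 T wb T_ge1 /=.
have x_bounded i (i_ge1 : (1 <= i)%N) := sqnorm_le_sqr C_gt0 (x_le i i_ge1).
have bound := regret_bound theta y wb eta_gt0 g_ge0 x_bounded T.
set w := wseq g eta theta x y in bound *.
set K := 1 - 2 * C ^+ 2 * eta in K_neq0 bound *.
rewrite big_split /= [X in _ * (_ + X)]
  (eq_bigr (fun i => g i * trunc_l1 (w i) (w i) theta / K));
  last by move=> i _; rewrite mulrAC.
rewrite -mulr_suml.
move: bound.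
set SL := \sum_(1 <= i < T.+1) (dot _ _ - _) ^+ 2.
set SA := \sum_(1 <= i < T.+1) g i * _.
set SR := \sum_(1 <= i < T.+1) (_ + _).
move=> bound.
have T_neq0 : T%:R != 0 :> R by rewrite pnatr_eq0 -lt0n.
have -> : K / T%:R * (SL + SA / K) = (K * SL + SA) / T%:R.
  by field; rewrite K_neq0 T_neq0.
have -> : sqnorm wb / (2 * eta * T%:R) + 1 / T%:R * SR
          = (sqnorm wb / (2 * eta) + SR) / T%:R.
  by field; rewrite T_neq0 gt_eqF.
by rewrite ler_wpM2r ?invr_ge0 ?ler0n.
Qed.
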